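(* Let $\alpha\in(0,1]$, $\lambda_\alpha=\sqrt{\log(1/\alpha)/2}$, $p_1,\dots,p_m\in[0,1]$, and for $A\subseteq\{1,\dots,m\}$, $t\in[0,1]$, $\varphi_{A,t}=\mathbf 1\{i_A(t)>|A|t+\sqrt{|A|}\lambda_\alpha\}$, $\varphi_A=\max_{t\in[0,1]}\varphi_{A,t}$. Then $\hat m_0^{\mathrm{SC1}}:=\hat V^{\mathrm{SC1}}_\varphi(\{1,\dots,m\})$ satisfies $$\hat m_0^{\mathrm{SC1}}=\min_{t\in[0,1)}\Big\lfloor\Big(\frac{\lambda_\alpha}{2(1-t)}+\sqrt{\frac{\lambda_\alpha^2}{4(1-t)^2}+\frac{m-i(t)}{1-t}}\Big)^2\Big\rfloor\wedge m.$$
   Context: $i_A(t)=\#\{j\in A:p_j\le t\}$, $i(t)=i_{\{1,\dots,m\}}(t)$. For $S\subseteq\{1,\dots,m\}$: $\varphi_{S,n,t}=\min\{\varphi_{A,t}:A\subseteq\{1,\dots,m\},|A\cap S|=n\}$ and $\hat V^{\mathrm{SC1}}_\varphi(S)=\max\{n\in\{0,\dots,|S|\}:\max_{t\in[0,1]}\varphi_{S,n,t}=0\}$. *)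

From HB Require Import structures.
From mathcomp Require Import all_boot all_order all_algebra.
From mathcomp Require Import all_classical all_reals all_analysis.
Set Implicit Arguments. Unset Strict Implicit. Unset Printing Implicit Defensive.
Import Order.TTheory GRing.Theory Num.Theory.
Local Open Scope ring_scope.
Local Open Scope classical_set_scope.

Section Defs.
Variables (R : realType) (m : nat) (p : 'I_m -> R).

Definition lam (alpha : R) : R := Num.sqrt (ln (alpha^-1) / 2).

Definition iA (A : {set 'I_m}) (t : R) : nat := #|[set j in A | p j <= t]|.

Definition icount (t : R) : nat := iA [set: 'I_m] t.

Definition phiAt (alpha : R) (A : {set 'I_m}) (t : R) : bool :=
  (#|A|%:R * t + Num.sqrt (#|A|%:R) * lam alpha < (iA A t)%:R).

(* phi_{S,n,t} = min { phi_{A,t} : |A cap S| = n }; a min of 0/1 indicators is 1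
   iff all of them are 1. *)
Definition phiSnt (alpha : R) (S : {set 'I_m}) (n : nat) (t : R) : bool :=
  [forall A : {set 'I_m}, (#|A :&: S| == n) ==> phiAt alpha A t].

Definition maxt_phi_zero (alpha : R) (S : {set 'I_m}) (n : nat) : Prop :=
  forall t : R, 0 <= t <= 1 -> ~~ phiSnt alpha S n t.

Definition VhatSC1 (alpha : R) (S : {set 'I_m}) : nat :=
  \max_(n < #|S|.+1 | `[< maxt_phi_zero alpha S n >]) (n : nat).

Definition gfun (alpha t : R) : R :=
  (lam alpha / (2 * (1 - t)) +
   Num.sqrt ((lam alpha) ^+ 2 / (4 * (1 - t) ^+ 2)
             + (m%:R - (icount t)%:R) / (1 - t))) ^+ 2.

(* min_{t in [0,1)} floor(gfun t), as the infimum of a set of integers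
   (bounded below by 0, hence attained) *)
Definition rhs_min (alpha : R) : R :=
  inf [set ((Num.floor (gfun alpha t))%:~R : R) | t in `[0, 1[%classic].

End Defs.

From HB Require Import structures.
From mathcomp Require Import all_boot all_order all_algebra.
From mathcomp Require Import all_classical all_reals all_analysis.
From mathcomp Require Import ring lra zify.
Set Implicit Arguments. Unset Strict Implicit. Unset Printing Implicit Defensive.
Import Order.TTheory GRing.Theory Num.Theory.
Local Open Scope ring_scope.

(* Let B(t) = {j | t < p_j}, so |B(t)| = m - i(t) and i_A(t) = |A :\: B(t)|.
   Among the sets A with |A| = n, one meeting B(t) as much as possible
   minimises i_A(t), to max(n - |B(t)|, 0); hence phi_{[m],n,t} = 1 iff
   n t + sqrt n lambda < n - |B(t)|.  With x = sqrt n this reads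
   (1 - t) x^2 - lambda x - |B(t)| > 0, whose failure for t < 1 means that x
   is at most the positive root, i.e. n <= g(t); at t = 1 nothing is rejected.
   So max_t phi_{[m],n,t} = 0 iff n <= floor g(t) for every t in [0,1), and
   the largest such n <= m is min_t floor g(t) capped at m. *)

Lemma exists_subset_card (T : finType) (X : {set T}) (k : nat) :
  (k <= #|X|)%N -> exists2 A : {set T}, A \subset X & #|A| = k.
Proof.
elim: k => [|k IHk] leX.
  by exists finset.set0; rewrite ?finset.sub0set ?cards0.
have [A sAX cardA] := IHk (ltnW leX).
have : (0 < #|X :\: A|)%N.
  by rewrite cardsD (finset.setIidPr sAX) cardA subn_gt0.
rewrite card_gt0 => /set0Pn [x]; rewrite inE => /andP [xNA xX].
exists (x |: A); first by rewrite finset.subUset finset.sub1set xX.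
by rewrite cardsU1 xNA cardA.
Qed.

Lemma exists_card_setD (T : finType) (X : {set T}) (n : nat) :
  (n <= #|T|)%N -> exists2 A : {set T}, #|A| = n & #|A :\: X| = (n - #|X|)%N.
Proof.
move=> le_nT; case: (leqP n #|X|) => [le_nX | lt_Xn].
  have [A sAX cardA] := exists_subset_card le_nX.
  exists A => //; move: sAX; rewrite -finset.setD_eq0 => /eqP ->.
  by rewrite cards0; apply/esym/eqP; rewrite subn_eq0.
have le_nXC : (n - #|X| <= #|~: X|)%N by move: (cardsC X); lia.
have [C sCX cardC] := exists_subset_card le_nXC.
have dCX : [disjoint C & X] by rewrite finset.disjoints_subset.
exists (X :|: C).
  by rewrite cardsU finset.setIC (finset.disjoint_setI0 dCX) cards0 cardC; lia.
by rewrite finset.setDUl finset.setDv finset.set0U (finset.setDidPl dCX).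
Qed.

Lemma bigmax_ord_downward (N k : nat) (P : pred nat) :
  (forall n, (n <= N)%N -> P n = (n <= k)%N) ->
  \max_(n < N.+1 | P n) (n : nat) = minn k N.
Proof.
move=> Pk; apply/eqP; rewrite eqn_leq; apply/andP; split.
  apply/bigmax_leqP => i Pi; have leiN : (i <= N)%N by rewrite -ltnS.
  by rewrite leq_min leiN andbT -Pk.
have ltN : (minn k N < N.+1)%N by rewrite ltnS geq_minr.
by apply: (leq_bigmax_cond (Ordinal ltN)); rewrite /= Pk ?geq_minl ?geq_minr.
Qed.

Lemma int_ge0_attains_min (T : Type) (S : set T) (f : T -> int) (t0 : T) :
  S t0 -> (forall t, S t -> 0 <= f t) ->
  exists2 t, S t & forall s, S s -> f t <= f s.
Proof.
move=> St0 f_ge0.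
pose P (k : nat) := `[< exists2 t, S t & f t = k%:Z >].
have exP : exists k, P k.
  by exists `|f t0|%N; apply/asboolP; exists t0; rewrite ?gez0_abs ?f_ge0.
have [k /asboolP [t St ftk] mink] := ex_minnP exP.
exists t => // s Ss; rewrite ftk -(gez0_abs (f_ge0 s Ss)) lez_nat.
by apply: mink; apply/asboolP; exists s; rewrite ?gez0_abs ?f_ge0.
Qed.

Lemma inf_image_int_min (R : realType) (T : Type) (S : set T) (f : T -> int)
    (t : T) :
  S t -> (forall s, S s -> f t <= f s) ->
  inf [set ((f s)%:~R : R) | s in S] = (f t)%:~R.
Proof.
move=> St minf; apply/eqP; rewrite eq_le; apply/andP; split.
  apply: ge_inf; last by exists t.
  by exists (f t)%:~R => _ [s Ss <-]; rewrite ler_int minf.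
apply: lb_le_inf; first by exists (f t)%:~R, t.
by move=> _ [s Ss <-]; rewrite ler_int minf.
Qed.

Lemma quadratic_le0_iff (R : rcfType) (a L c x : R) : 0 < a -> 0 <= L ->
  0 <= c -> 0 <= x ->
  (a * x ^+ 2 - L * x - c <= 0) =
  (x <= L / (2 * a) + Num.sqrt (L ^+ 2 / (4 * a ^+ 2) + c / a)).
Proof.
move=> a_gt0 L_ge0 c_ge0 x_ge0.
set u := L / (2 * a); set s := Num.sqrt _.
have u_ge0 : 0 <= u by rewrite divr_ge0 // mulr_ge0 // ltW.
have s_ge0 : 0 <= s := sqrtr_ge0 _.
have s2 : s ^+ 2 = u ^+ 2 + c / a.
  rewrite sqr_sqrtr; last first.
    by rewrite addr_ge0 ?divr_ge0 ?mulr_ge0 ?sqr_ge0 ?(ltW a_gt0).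
  by rewrite /u expr_div_n exprMn -natrX.
have le_us : u <= s.
  by rewrite -(ler_pXn2r (n := 2)) ?nnegrE // s2 lerDl divr_ge0 // ltW.
have -> : a * x ^+ 2 - L * x - c = a * ((x - u) ^+ 2 - s ^+ 2).
  by rewrite s2 /u; field; rewrite lt0r_neq0.
rewrite pmulr_rle0 // subr_le0.
by apply/idP/idP => h; nra.
Qed.

Lemma ltr_natB (R : realDomainType) (y : R) (n c : nat) : 0 <= y ->
  (y < (n - c)%N%:R) = (y < n%:R - c%:R).
Proof.
move=> y_ge0; case: (leqP c n) => [le_cn | lt_nc]; first by rewrite natrB.
have -> : (n - c)%N = 0%N by apply/eqP; rewrite subn_eq0 ltnW.
rewrite ltNge y_ge0; apply/esym/negbTE; rewrite -leNgt.
by apply: le_trans y_ge0; rewrite subr_le0 ler_nat ltnW.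
Qed.

Section Rejection.
Variables (R : realType) (m : nat) (p : 'I_m -> R) (alpha : R).

Definition pvals_gt (t : R) : {set 'I_m} := [set j | t < p j].

Lemma iA_setD (A : {set 'I_m}) t : iA p A t = #|A :\: pvals_gt t|.
Proof. by apply: eq_card => j; rewrite !inE -leNgt andbC. Qed.

Lemma icount_add_card_pvals_gt t : (icount p t + #|pvals_gt t| = m)%N.
Proof. by rewrite /icount iA_setD finset.setTD addnC cardsC card_ord. Qed.

Lemma phiSnt_setT n t : (n <= m)%N ->
  phiSnt p alpha [set: 'I_m] n t =
  (n%:R * t + Num.sqrt n%:R * lam alpha < (n - #|pvals_gt t|)%N%:R).
Proof.
move=> le_nm; rewrite /phiSnt /phiAt; apply/forallP/idP => [allA | lt_n A].
  have [|A cardA cardAB] := exists_card_setD (pvals_gt t) (n := n).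
    by rewrite card_ord.
  have := implyP (allA A).
  by rewrite finset.setIT cardA eqxx iA_setD cardAB; apply.
apply/implyP; rewrite finset.setIT => /eqP cardA; rewrite cardA.
apply: (lt_le_trans lt_n); rewrite ler_nat iA_setD cardsD -cardA.
by rewrite leq_sub2l // subset_leq_card // finset.subsetIr.
Qed.

Lemma natr_le_gfun n t : 0 <= t < 1 ->
  (n%:R - #|pvals_gt t|%:R <= n%:R * t + Num.sqrt n%:R * lam alpha) =
  (n%:R <= gfun p alpha t).
Proof.
case/andP => t_ge0 t_lt1.
set x := Num.sqrt (n%:R : R); set c := #|pvals_gt t|; set L := lam alpha.
have x_ge0 : 0 <= x := sqrtr_ge0 _.
have x2 : x ^+ 2 = n%:R by rewrite sqr_sqrtr ?ler0n.
have lt0_1t : 0 < 1 - t by rewrite subr_gt0.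
rewrite /gfun -/L.
have -> : (n%:R - c%:R <= n%:R * t + x * L) =
          ((1 - t) * x ^+ 2 - L * x - c%:R <= 0).
  by rewrite -subr_le0 x2; congr (_ <= 0); ring.
have -> : m%:R - (icount p t)%:R = c%:R :> R.
  by rewrite -[X in X%:R - _](icount_add_card_pvals_gt t) natrD addrC addKr.
rewrite quadratic_le0_iff ?sqrtr_ge0 ?ler0n // -x2 ler_pXn2r // nnegrE //.
by rewrite addr_ge0 ?sqrtr_ge0 // divr_ge0 ?sqrtr_ge0 // mulr_ge0 // ltW.
Qed.

Lemma maxt_phi_zero_setT n : (n <= m)%N ->
  maxt_phi_zero p alpha [set: 'I_m] n <->
  (forall t, 0 <= t < 1 -> n%:Z <= Num.floor (gfun p alpha t)).
Proof.
have rhs_ge0 t : 0 <= t -> 0 <= n%:R * t + Num.sqrt n%:R * lam alpha.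
  by move=> t_ge0; rewrite addr_ge0 ?mulr_ge0 ?sqrtr_ge0.
move=> le_nm; split=> [no_rej t /andP [t_ge0 t_lt1] |].
  have := no_rej t; rewrite t_ge0 ltW //= => /(_ isT).
  rewrite phiSnt_setT // ltr_natB ?rhs_ge0 // -leNgt.
  by rewrite natr_le_gfun ?t_ge0 // floor_ge_int.
move=> floor_ge t /andP [t_ge0 t_le1].
rewrite phiSnt_setT // ltr_natB ?rhs_ge0 // -leNgt.
have [t_lt1 | t_ge1] := ltP t 1.
  rewrite natr_le_gfun ?t_ge0 //.
  by have := floor_ge t; rewrite floor_ge_int t_ge0; apply.
have -> : t = 1 by apply/eqP; rewrite eq_le t_le1 t_ge1.
rewrite mulr1 lerD // (@le_trans _ _ 0) ?oppr_le0 //.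
by rewrite mulr_ge0 ?sqrtr_ge0.
Qed.
End Rejection.

Theorem mainTheorem11 (R : realType) (m : nat) (p : 'I_m -> R) (alpha : R)
  (halpha : 0 < alpha <= 1) (hp : forall j, 0 <= p j <= 1) :
  ((VhatSC1 p alpha [set: 'I_m])%:R : R) = Num.min (rhs_min p alpha) m%:R.
Proof.
set g := gfun p alpha; set S : set R := `[0, 1[%classic.
have S_itv t : S t = (0 <= t < 1) by rewrite /S /= in_itv.
have [|t _|t0 S_t0 t0_min] := @int_ge0_attains_min _ S (Num.floor \o g) 0.
- by rewrite S_itv lexx ltr01.
- by rewrite /= floor_ge0 sqr_ge0.
set k := `|Num.floor (g t0)|%N.
have floor_g_t0 : Num.floor (g t0) = k%:Z by rewrite gez0_abs // floor_ge0 sqr_ge0.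
have no_rej_iff n :
    (n <= m)%N -> maxt_phi_zero p alpha [set: 'I_m] n <-> (n <= k)%N.
  move=> le_nm; rewrite maxt_phi_zero_setT //; split=> [floor_ge | le_nk t St].
    by have := floor_ge t0; rewrite -S_itv floor_g_t0 lez_nat; apply.
  rewrite -S_itv in St; apply: le_trans (t0_min t St).
  by rewrite /= floor_g_t0 lez_nat.
have -> : VhatSC1 p alpha [set: 'I_m] = minn k m.
  rewrite /VhatSC1 cardsT card_ord.
  apply: (bigmax_ord_downward (P := fun n => `[< maxt_phi_zero p alpha _ n >])).
  move=> n le_nm.
  by apply/idP/idP => [/asboolP/(no_rej_iff n le_nm)|
                      /(no_rej_iff n le_nm)/asboolP].
rewrite /rhs_min -/g -/S.
rewrite (inf_image_int_min _ (f := Num.floor \o g) S_t0 t0_min).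
by rewrite /= floor_g_t0 -natr_min.
Qed.
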